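(* Let $k\ge3$. For $0\le m\le P_k-1$ let $S_k^{(m)}=\{N:5+mP_{k-1}\#\le N\le 4+(m+1)P_{k-1}\#\}$, and let $\widetilde P^{(m)<}$ and $\widetilde P^{(m)>}$ be the least and greatest integers in $S_k^{(m)}$ that are coprime to $P_k\#$. For $1\le m\le P_k-1$ define the subset gap $g_m=\widetilde P^{(m)<}-\widetilde P^{(m-1)>}$. Then among the $P_k-1$ subset gaps $g_1,\dots,g_{P_k-1}$, exactly $P_k-2$ equal $P_k-1$ and exactly one equals $P_k+1$.
   Context: $P_k$ denotes the $k$-th prime ($P_1=2$) and $P_k\#=\prod_{i=1}^kP_i$. *)

From mathcomp Require Import all_boot.
Set Implicit Arguments. Unset Strict Implicit. Unset Printing Implicit Defensive.

Lemma next_prime_ex (m : nat) : exists p, (m < p) && prime p.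
Proof. by have [p Hp Pp] := prime_above m; exists p; rewrite Hp Pp. Qed.

Definition next_prime (m : nat) : nat := ex_minn (next_prime_ex m).

(* Pidx i = the (i+1)-th prime (0-based internal index) *)
Fixpoint Pidx (i : nat) : nat :=
  match i with 0 => 2 | i'.+1 => next_prime (Pidx i') end.

(* P k = P_k, the k-th prime, with P 1 = 2 *)
Definition P (k : nat) : nat := Pidx k.-1.

Definition primorial (k : nat) : nat := \prod_(1 <= i < k.+1) P i.

(* elements of S_k^(m) = [5 + m P_{k-1}#, 4 + (m+1) P_{k-1}#] coprime to P_k#,
   in increasing order *)
Definition Scop (k m : nat) : seq nat :=
  [seq N <- iota (5 + m * primorial k.-1) (primorial k.-1) | coprime N (primorial k)].

Definition Plow (k m : nat) : nat := head 0 (Scop k m).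
Definition Phigh (k m : nat) : nat := last 0 (Scop k m).

Definition gap (k m : nat) : nat := Plow k m - Phigh k m.-1.

(** Write [Q = P_{k-1}#] and [p = P_k], so [P_k# = Q p] and the primes dividing
    [Q] are exactly those below [p]. Hence [mQ + r] is coprime to [Q p] iff
    [r] is coprime to [Q] and [p] does not divide [mQ + r]; residues
    [1 < r < p] (among them 2, 3, 4) are never coprime to [Q].
    For [1 <= m <= p - 1] the block [S^(m)] therefore starts at [mQ + p], and
    the block [S^(m-1)] ends at [mQ + 1], unless [p] divides [mQ + 1], in which
    case it ends at [mQ - 1]. So [g_m = p - 1] or [p + 1], and the latter
    happens for exactly one [m], namely [m = -Q^{-1} mod p]. *)

From mathcomp Require Import all_boot zify.

Set Implicit Arguments.
Unset Strict Implicit.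
Unset Printing Implicit Defensive.

Lemma next_primeP m : [/\ m < next_prime m, prime (next_prime m) &
  forall n, m < n -> prime n -> next_prime m <= n].
Proof.
rewrite /next_prime; case: ex_minnP => n /andP[m_lt_n pr_n] n_min.
by split => // q m_lt_q pr_q; apply: n_min; rewrite m_lt_q pr_q.
Qed.

Lemma Pidx_prime i : prime (Pidx i).
Proof. by case: i => [|i] //=; case: (next_primeP (Pidx i)). Qed.

Lemma Pidx_ltS i : Pidx i < Pidx i.+1.
Proof. by case: (next_primeP (Pidx i)). Qed.

Lemma Pidx_ge i : i.+2 <= Pidx i.
Proof. by elim: i => // i IH; apply: leq_ltn_trans IH (Pidx_ltS i). Qed.

Lemma prime_ltn_PidxS q i : prime q -> (q < Pidx i.+1) = (q <= Pidx i).
Proof.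
move=> pr_q; apply/idP/idP => [|le_q]; last exact: leq_ltn_trans le_q (Pidx_ltS i).
apply: contraTT; rewrite -!ltnNge => lt_q.
by case: (next_primeP (Pidx i)) => _ _; apply.
Qed.

Lemma primorialS k : primorial k.+1 = primorial k * P k.+1.
Proof. by rewrite /primorial big_nat_recr. Qed.

Lemma primorial_pred k : 0 < k -> primorial k = primorial k.-1 * P k.
Proof. by case: k => // k _; apply: primorialS. Qed.

Lemma prime_dvd_primorial q k : prime q -> (q %| primorial k) = (q < Pidx k).
Proof.
move=> pr_q; elim: k => [|k IH].
  by rewrite /primorial big_geq // dvdn1 ltnNge prime_gt1 // gtn_eqF ?prime_gt1.
rewrite primorialS Euclid_dvdM // IH dvdn_prime2 ?Pidx_prime //.
by rewrite prime_ltn_PidxS // [in RHS]leq_eqVlt orbC.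
Qed.

Lemma iota_split_at s n a : s <= a < s + n ->
  iota s n = iota s (a - s) ++ a :: iota a.+1 (s + n - a.+1).
Proof.
move=> a_in; have {1}-> : n = a - s + (s + n - a.+1).+1 by lia.
by rewrite iotaD subnKC //; case/andP: a_in.
Qed.

Lemma head_filter_iota (T : pred nat) x0 s n a : s <= a < s + n -> T a ->
  (forall x, s <= x < a -> ~~ T x) -> head x0 (filter T (iota s n)) = a.
Proof.
move=> a_in Ta before_a; rewrite (iota_split_at a_in) filter_cat.
rewrite (@eq_in_filter _ _ pred0) ?filter_pred0 /= ?Ta // => x.
by rewrite mem_iota => x_in; apply/negbTE/before_a; lia.
Qed.

Lemma last_filter_iota (T : pred nat) x0 s n a : s <= a < s + n -> T a ->
  (forall x, a < x < s + n -> ~~ T x) -> last x0 (filter T (iota s n)) = a.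
Proof.
move=> a_in Ta after_a; rewrite (iota_split_at a_in) filter_cat /= Ta.
rewrite (@eq_in_filter _ _ pred0 (iota a.+1 _)) ?filter_pred0 ?last_cat // => x.
by rewrite mem_iota => x_in; apply/negbTE/after_a; lia.
Qed.

Lemma count_dvdn_mul_add1 p Q : prime p -> ~~ (p %| Q) ->
  count (fun m => p %| m * Q + 1) (iota 1 p.-1) = 1.
Proof.
move=> pr_p p_ndvd_Q; have p_gt0 := prime_gt0 pr_p.
have [a a_lt_p] := Bezoutl Q p_gt0.
have /eqP-> : coprime p Q by rewrite prime_coprime.
rewrite addnC => dvd_a.
have root_uniq m : m < p -> (p %| m * Q + 1) = (m == a).
  move=> m_lt_p; apply/idP/eqP => [dvd_m|->] //.
  wlog le_ma : a m dvd_a dvd_m a_lt_p m_lt_p / m <= a.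
    move=> wlog_le; case: (leqP m a) => [|/ltnW le_am]; first exact: wlog_le.
    by rewrite (wlog_le m a).
  have : p %| (a - m) * Q by rewrite mulnBl -(subnDr 1) dvdn_sub.
  rewrite Euclid_dvdM // (negbTE p_ndvd_Q) orbF => /dvdn_leq.
  lia.
have a_gt0 : 0 < a.
  by case: a dvd_a {a_lt_p root_uniq} => // /[!dvdn1] /eqP p1; rewrite p1 in pr_p.
rewrite (@eq_in_count _ _ (pred1 a)) => [|m]; last first.
  by rewrite mem_iota => m_in; apply: root_uniq; lia.
by rewrite count_uniq_mem ?iota_uniq // mem_iota (_ : 1 <= a < 1 + p.-1) //; lia.
Qed.

Definition coprime_block (Q p m : nat) : seq nat :=
  [seq N <- iota (5 + m * Q) Q | coprime N (Q * p)].

Section Blocks.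

Variables Q p : nat.
Hypotheses (pr_p : prime p) (p_ge5 : 5 <= p)
  (prime_dvd_Q : forall q, prime q -> (q %| Q) = (q < p)).

Lemma p_ndvd_Q : ~~ (p %| Q).
Proof. by rewrite prime_dvd_Q // ltnn. Qed.

Lemma Q_gt0 : 0 < Q.
Proof. by rewrite lt0n; apply: contraNneq p_ndvd_Q => ->; apply: dvdn0. Qed.

Lemma Q_ge6 : 6 <= Q.
Proof.
have dvd2 : 2 %| Q by rewrite prime_dvd_Q //; lia.
have dvd3 : 3 %| Q by rewrite prime_dvd_Q //; lia.
by have := Q_gt0; lia.
Qed.

Lemma ncoprime_small r : 1 < r < p -> ~~ coprime r Q.
Proof.
case/andP=> r_gt1 r_lt_p; have pr_d := pdiv_prime r_gt1.
apply/negP => /(coprime_dvdl (pdiv_dvd r)); rewrite prime_coprime // prime_dvd_Q //.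
by rewrite (leq_ltn_trans (pdiv_leq _)) //; lia.
Qed.

Lemma p_leq_Q1 : p <= Q.+1.
Proof.
rewrite leqNgt; apply: contraL (coprimeSn Q) => lt_Q1.
by apply: ncoprime_small; have := Q_gt0; lia.
Qed.

Lemma coprime_mulQ_add n r :
  coprime (n * Q + r) (Q * p) = coprime r Q && ~~ (p %| n * Q + r).
Proof.
rewrite coprimeMr [coprime _ p]coprime_sym (prime_coprime _ pr_p).
by rewrite /coprime gcdnC gcdnMDl gcdnC.
Qed.

Lemma ncoprime_mulQ_add n r : 1 < r < p -> ~~ coprime (n * Q + r) (Q * p).
Proof.
by move=> r_small; rewrite coprime_mulQ_add (negbTE (ncoprime_small r_small)).
Qed.

Lemma coprime_block_head m :
  ~~ (p %| m) -> head 0 (coprime_block Q p m) = m * Q + p.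
Proof.
move=> p_ndvd_m; have p_leq_Q1 := p_leq_Q1; rewrite /coprime_block.
apply: head_filter_iota; first lia.
  rewrite coprime_mulQ_add prime_coprime // p_ndvd_Q /=.
  by rewrite dvdn_addl // Euclid_dvdM // negb_or p_ndvd_m p_ndvd_Q.
move=> x x_in; have -> : x = m * Q + (x - m * Q) by lia.
by apply: ncoprime_mulQ_add; lia.
Qed.

Lemma coprime_block_last m : last 0 (coprime_block Q p m) =
  if p %| m.+1 * Q + 1 then m.+1 * Q - 1 else m.+1 * Q + 1.
Proof.
have Q_ge6 := Q_ge6; have mSQ : m.+1 * Q = m * Q + Q := mulSnr m Q.
have beyond x : m.+1 * Q + 1 < x < 5 + m * Q + Q -> ~~ coprime x (Q * p).
  move=> x_in; have -> : x = m.+1 * Q + (x - m.+1 * Q) by lia.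
  by apply: ncoprime_mulQ_add; lia.
rewrite /coprime_block; case: ifP => [p_dvd | p_ndvd]; last first.
  apply: last_filter_iota => //; first lia.
  by rewrite coprime_mulQ_add coprime1n p_ndvd.
have -> : m.+1 * Q - 1 = m * Q + Q.-1 by lia.
apply: last_filter_iota; first lia.
  rewrite coprime_mulQ_add coprimePn ?Q_gt0 //=; apply/negP => p_dvd'.
  have : p %| (m.+1 * Q + 1) - (m * Q + Q.-1) by apply: dvdn_sub.
  have -> : m.+1 * Q + 1 - (m * Q + Q.-1) = 2 by lia.
  by move/dvdn_leq; lia.
move=> x x_in; case: (ltnP (m.+1 * Q + 1) x) => [x_gt | x_le].
  by apply: beyond; lia.
have [->|->] : x = m.+1 * Q + 0 \/ x = m.+1 * Q + 1 by lia.
  by rewrite coprime_mulQ_add /coprime gcd0n; case: eqP => //; lia.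
by rewrite coprime_mulQ_add p_dvd andbF.
Qed.

Lemma coprime_block_gap m : 0 < m < p ->
  head 0 (coprime_block Q p m) - last 0 (coprime_block Q p m.-1) =
  if p %| m * Q + 1 then p.+1 else p.-1.
Proof.
case/andP=> m_gt0 m_lt_p; have mQ_gt0 : 0 < m * Q by rewrite muln_gt0 m_gt0 Q_gt0.
rewrite coprime_block_last prednK // coprime_block_head; last first.
  by apply/negP => /dvdn_leq; lia.
by case: ifP; lia.
Qed.

End Blocks.

Theorem lemma9 (k : nat) (hk : 3 <= k) :
  count (fun m => gap k m == (P k).-1) (iota 1 (P k).-1) = (P k - 2)%N /\
  count (fun m => gap k m == (P k).+1) (iota 1 (P k).-1) = 1%N.
Proof.
set p := P k; set Q := primorial k.-1.
have pr_p : prime p := Pidx_prime k.-1.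
have p_ge5 : 5 <= p.
  have : p != 4 by apply: contraTneq pr_p => ->.
  by have := Pidx_ge k.-1; rewrite -/(P k) -/p; lia.
have prime_dvd_Q q : prime q -> (q %| Q) = (q < p) := @prime_dvd_primorial q k.-1.
have gapE m : m \in iota 1 p.-1 -> gap k m = if p %| m * Q + 1 then p.+1 else p.-1.
  rewrite mem_iota => m_in; rewrite /gap /Plow /Phigh /Scop primorial_pred; last lia.
  by apply: coprime_block_gap => //; lia.
set bad := fun m => p %| m * Q + 1.
have count_bad : count bad (iota 1 p.-1) = 1.
  exact: count_dvdn_mul_add1 pr_p (p_ndvd_Q pr_p prime_dvd_Q).
have pS_neq_pP : (p.+1 == p.-1) = false by apply/negbTE/eqP; lia.
split.
  rewrite (@eq_in_count _ _ (predC bad)) => [|m /gapE->]; last first.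
    by rewrite /= /bad; case: (p %| _); rewrite /= ?eqxx ?pS_neq_pP.
  have := count_predC bad (iota 1 p.-1).
  by rewrite count_bad size_iota; move: (count _ _) => c; lia.
rewrite -[RHS]count_bad; apply: eq_in_count => m /gapE->.
by rewrite /bad; case: (p %| _); rewrite /= ?eqxx // eq_sym pS_neq_pP.
Qed.
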